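(* Let $G=(N,A)$ be a compressed $s$-$t$ DAG and let $u\in N$. Then $\mathrm{ext}(u)$ is a maximal safe sequence of $G$ (for path covers) if and only if $u$ is a leaf in both the $s$-dominator tree and the $t$-dominator tree of $G$.
   Context: An $s$-$t$ DAG is a directed acyclic graph with a unique source $s$ and a unique sink $t$ such that every node is reachable from $s$ and every node reaches $t$. A unitary path is a path in which every node other than the first has indegree exactly one and every node other than the last has outdegree exactly one. The DAG is compressed if it equals its own compressed graph (the graph obtained by contracting every maximal unitary path into a single node), i.e. it has no unitary path with two or more nodes; equivalently there is no arc $uv$ with out-neighbourhood of $u$ equal to $\{v\}$ and in-neighbourhood of $v$ equal to $\{u\}$. A node $u$ $s$-dominates $v$ if every $s$-$v$ path contains $u$ ($u$ strictly $s$-dominates $v$ if moreover $u\ne v$); $v$ $t$-dominates $u$ if every $u$-$t$ path contains $v$. For $v\neq s$, the immediate $s$-dominator of $v$ is the strict $s$-dominator of $v$ that is $s$-dominated by all strict $s$-dominators of $v$. The $s$-dominator tree is the tree on $N$ rooted at $s$ where the parent of each $v\ne s$ is its immediate $s$-dominator; the $t$-dominator tree is defined symmetrically (rooted at $t$). A leaf is a node with no children. For a node $v$, $\mathrm{ext}(v)$ is the concatenation of the sequence of $s$-$v$ cutnodes (nodes on every $s$-$v$ path, in path order) with the sequence of $v$-$t$ cutnodes, with the repeated occurrence of $v$ removed. A sequence of nodes $X=u_1,\dots,u_\ell$ is a list with a $u_i$-$u_{i+1}$ path for all $i$; it is a subsequence of $Y$ if every node of $X$ occurs in $Y$. A path cover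 is a set of $s$-$t$ paths covering all nodes. $X$ is safe if in every path cover it is a subsequence of some path of the cover (sequences contained in no $s$-$t$ path are unsafe); it is maximal safe if it is safe and not a proper subsequence of another safe sequence. *)

From mathcomp Require Import all_boot.
From mathcomp Require Import boolp.

Set Implicit Arguments.
Unset Strict Implicit.
Unset Printing Implicit Defensive.

Section DAG.
Variables (T : finType) (e : rel T) (s t : T).

(* A walk from x is x :: p with path e x p; it ends at last x p. *)

Definition acyclic : Prop :=
  forall x p, path e x p -> last x p = x -> p = [::].

Definition st_dag : Prop :=
  [/\ acyclic,
      (forall v, (forall w, ~~ e w v) <-> v = s),
      (forall v, (forall w, ~~ e v w) <-> v = t),
      (forall v, connect e s v) &
      (forall v, connect e v t)].

Definition compressed : Prop :=
  forall u v, e u v ->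
    ~ ((forall w, e u w -> w = v) /\ (forall w, e w v -> w = u)).

Definition sdom (u v : T) : Prop :=
  forall p, path e s p -> last s p = v -> u \in s :: p.

Definition tdom (v u : T) : Prop :=
  forall p, path e u p -> last u p = t -> v \in u :: p.

(* w is the immediate s-dominator of v (i.e. the parent of v in the
   s-dominator tree) *)
Definition sidom (w v : T) : Prop :=
  [/\ v <> s, w <> v, sdom w v &
      forall x, x <> v -> sdom x v -> sdom x w].

(* w is the immediate t-dominator of v (parent in the t-dominator tree) *)
Definition tidom (w v : T) : Prop :=
  [/\ v <> t, w <> v, tdom w v &
      forall x, x <> v -> tdom x v -> tdom x w].

Definition sleaf (u : T) : Prop := forall v, ~ sidom u v.
Definition tleaf (u : T) : Prop := forall v, ~ tidom u v.

Definition s_cuts (u : T) : seq T :=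
  sort (connect e) (enum [set x | `[< sdom x u >]]).
Definition t_cuts (u : T) : seq T :=
  sort (connect e) (enum [set x | `[< tdom x u >]]).

(* ext(u): s-u cutnodes followed by u-t cutnodes, repeated u removed
   (u is the last of s_cuts u and the first of t_cuts u) *)
Definition ext (u : T) : seq T := s_cuts u ++ behead (t_cuts u).

Definition is_sequence (X : seq T) : Prop := sorted (connect e) X.

Definition subseqn (X Y : seq T) : Prop := {subset X <= Y}.

Definition st_path (P : seq T) : Prop :=
  exists p, [/\ P = s :: p, path e s p & last s p = t].

Definition path_cover (C : seq (seq T)) : Prop :=
  (forall P, P \in C -> st_path P) /\
  (forall v, exists2 P, P \in C & v \in P).

Definition safe (X : seq T) : Prop :=
  [/\ is_sequence X,
      (exists P, st_path P /\ subseqn X P) &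
      (forall C, path_cover C -> exists2 P, P \in C & subseqn X P)].

Definition max_safe (X : seq T) : Prop :=
  safe X /\
  ~ (exists Y, [/\ safe Y, subseqn X Y & exists2 y, y \in Y & y \notin X]).

End DAG.

(* ext(u) is the set of nodes lying on every s-t path through u, so it is safe: every
   path cover has a path through u.  If u strictly s-dominates some node, compressedness
   yields a node w strictly s-dominated by u which does not t-dominate u (otherwise u
   would have a unique out-neighbour whose only in-neighbour is u); then ext(w) is a
   safe proper extension of ext(u).  Dually for the t-dominator tree.  Conversely, if u
   is a leaf of both trees, every node v <> u lies on an s-t path avoiding u, and for
   y outside ext(u) some s-t path through u avoids y; a path cover made of such paths
   has no path containing both u and y, so no safe sequence strictly extends ext(u). *)

From mathcomp Require Import all_boot.
From mathcomp Require Import boolp.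

Set Implicit Arguments.
Unset Strict Implicit.
Unset Printing Implicit Defensive.

Section Walks.
Variables (T : finType) (e : rel T).

Lemma path_connect_last x p y :
  path e x p -> y \in x :: p -> connect e y (last x p).
Proof.
move=> xp yin; case/splitPl: yin xp => p1 p2 p1y.
rewrite cat_path last_cat p1y => /andP [_ p2P].
by apply/connectP; exists p2.
Qed.

Lemma path_connect_total x p a b :
  path e x p -> a \in x :: p -> b \in x :: p -> connect e a b || connect e b a.
Proof.
move=> xp ain; case/splitPl: ain xp => p1 p2 p1a.
rewrite cat_path -cat_cons mem_cat p1a => /andP [p1P p2P] /orP [bp1 | bp2].
  by rewrite -p1a (path_connect_last p1P bp1) orbT.
by rewrite (path_connect p2P) // inE bp2 orbT.
Qed.

Lemma sort_connect_sorted x p (l : seq T) :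
  path e x p -> {subset l <= x :: p} -> sorted (connect e) (sort (connect e) l).
Proof.
move=> xp l_sub; apply: (sort_sorted_in (P := [in x :: p])); last exact/allP.
by move=> a b; exact: path_connect_total xp.
Qed.

Lemma last_rev_belast (x : T) p : last (last x p) (rev (belast x p)) = x.
Proof. by case: p => [|y p] //=; rewrite rev_cons last_rcons. Qed.

Lemma mem_rev_belast (x : T) p : last x p :: rev (belast x p) =i x :: p.
Proof. by move=> z; rewrite -rev_rcons -lastI mem_rev. Qed.

End Walks.

Section Acyclic.
Variables (T : finType) (e : rel T).
Hypothesis e_acyclic : acyclic e.

Lemma acyclic_arc_neq x y : e x y -> x <> y.
Proof.
move=> exy xy; rewrite xy in exy.
by have := @e_acyclic y [:: y]; rewrite /= exy => /(_ isT erefl).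
Qed.

Lemma acyclic_connect_antisym x y : connect e x y -> connect e y x -> x = y.
Proof.
move=> /connectP [p xp ->] /connectP [q yq qx].
have := @e_acyclic x (p ++ q); rewrite cat_path xp yq last_cat -qx.
by move=> /(_ isT erefl); case: p {xp yq qx}.
Qed.

Lemma acyclic_arc_back x y : e x y -> ~ connect e y x.
Proof.
by move=> xy yx; exact: acyclic_arc_neq xy (acyclic_connect_antisym (connect1 xy) yx).
Qed.

Lemma connect_minimal (P : T -> Prop) w0 :
  P w0 -> exists2 w, P w & forall x, P x -> connect e x w -> x = w.
Proof.
move=> /asboolP Pw0.
have [w /asboolP Pw w_min] :=
  @arg_minnP _ _ (fun w => `[< P w >]) (fun w => #|[pred z | connect e z w]|) Pw0.
exists w => // x Px xw; apply: contrapT => x_neq_w.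
have := w_min x (asboolT Px); apply/negP; rewrite -ltnNge.
apply: proper_card; apply/properP; split.
  by apply/subsetP => z; rewrite !inE => /connect_trans; apply.
exists w; rewrite !inE ?connect0 //.
by apply/negP => wx; exact: x_neq_w (acyclic_connect_antisym xw wx).
Qed.

Lemma sorted_connect_head (l : seq T) u :
  sorted (connect e) l -> u \in l -> {in l, forall x, connect e u x} ->
  l = u :: behead l.
Proof.
case: l => [|h l] //= hl; rewrite in_cons => /orP [/eqP -> // | ul] u_min.
have hu : connect e h u by apply: (allP (order_path_min (@connect_trans T e) hl)).
by rewrite (acyclic_connect_antisym hu (u_min h (mem_head h l))).
Qed.

End Acyclic.

Section SourceDominators.
Variables (T : finType) (e : rel T) (s : T).

Lemma sdom_refl u : sdom e s u u.
Proof. by move=> p _ <-; exact: mem_last. Qed.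

Lemma sdom_trans x u v : sdom e s x u -> sdom e s u v -> sdom e s x v.
Proof.
move=> xu uv p sp pv; have up := uv p sp pv; case/splitPl: up sp => p1 p2 p1u.
by rewrite cat_path -cat_cons mem_cat => /andP [/xu -> //].
Qed.

Lemma sdom_source x : sdom e s x s -> x = s.
Proof. by move=> /(_ [::] isT erefl); rewrite inE => /eqP. Qed.

Lemma not_sdom x v :
  ~ sdom e s x v -> exists p, [/\ path e s p, last s p = v & x \notin s :: p].
Proof.
move=> /existsNP [p /not_implyP [sp /not_implyP [pv /negP xp]]].
by exists p.
Qed.

Hypotheses (e_acyclic : acyclic e) (s_reach : forall v, connect e s v).

Lemma sdom_connect u v : sdom e s u v -> connect e u v.
Proof.
move=> uv; case/connectP: (s_reach v) => p sp pv.
by rewrite pv; apply: path_connect_last sp (uv p sp (esym pv)).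
Qed.

Lemma sdom_antisym u v : sdom e s u v -> sdom e s v u -> u = v.
Proof.
by move=> uv vu; apply: acyclic_connect_antisym (sdom_connect uv) (sdom_connect vu).
Qed.

(* An s-u path continued to w meets x, and x cannot come after u since x reaches u. *)
Lemma sdom_connect_sdom x u w :
  sdom e s x w -> sdom e s u w -> connect e x u -> sdom e s x u.
Proof.
move=> xw uw xu p sp pu.
case/connectP: (sdom_connect uw) => q uq qw.
have := xw (p ++ q); rewrite cat_path sp pu uq last_cat pu -qw => /(_ isT erefl).
rewrite -cat_cons mem_cat => /orP [// | xq].
have ux : connect e u x by rewrite (path_connect uq) // inE xq orbT.
by rewrite (acyclic_connect_antisym e_acyclic xu ux) -pu mem_last.
Qed.

Lemma sdom_total x u w :
  sdom e s x w -> sdom e s u w -> sdom e s x u \/ sdom e s u x.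
Proof.
move=> xw uw; case/connectP: (s_reach w) => p sp pw.
have /orP [xu | ux] := path_connect_total sp (xw p sp (esym pw)) (uw p sp (esym pw)).
  by left; exact: sdom_connect_sdom xw uw xu.
by right; exact: sdom_connect_sdom uw xw ux.
Qed.

(* The child is a minimal (closest to u) node strictly dominated by u. *)
Lemma sdom_child u v : sdom e s u v -> v <> u -> exists w, sidom e s u w.
Proof.
move=> uv v_neq_u.
have [w [uw w_neq_u] w_min] :=
  connect_minimal e_acyclic (P := fun w => sdom e s u w /\ w <> u) (conj uv v_neq_u).
exists w; split=> [ws | uw_eq | // | x x_neq_w xw].
- by apply: w_neq_u; rewrite ws in uw *; rewrite (sdom_source uw).
- exact: w_neq_u.
- have [// | ux] := sdom_total xw uw.
  have [-> | x_neq_u] := eqVneq x u; first exact: sdom_refl.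
  by case: x_neq_w; apply: w_min (conj ux (elimN eqP x_neq_u)) (sdom_connect xw).
Qed.

End SourceDominators.

Section Reversal.
Variables (T : finType) (e : rel T).
Local Notation e' := [rel x y | e y x].

Lemma acyclic_rev : acyclic e -> acyclic e'.
Proof.
move=> e_acyclic x p xp px.
have := @e_acyclic x (rev (belast x p)).
rewrite -{1}px rev_path -[X in last X (rev _)]px last_rev_belast => /(_ xp erefl).
by move/(congr1 size); rewrite size_rev size_belast; case: p {xp px}.
Qed.

Lemma compressed_rev : compressed e -> compressed e'.
Proof. by move=> e_comp x y yx [xy yx_uniq]; apply: (e_comp y x yx). Qed.

Lemma walk_dom_rev (r : rel T) a x y :
  (forall p, path r y p -> last y p = a -> x \in y :: p) ->
  forall p, path [rel b c | r c b] a p -> last a p = y -> x \in a :: p.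
Proof.
move=> x_dom p ap py; rewrite -mem_rev_belast py.
by apply: x_dom; rewrite -py ?rev_path ?last_rev_belast.
Qed.

Lemma tdom_rev t x y : tdom e t x y <-> sdom e' t x y.
Proof. by split; [exact: walk_dom_rev | exact: (@walk_dom_rev e')]. Qed.

Lemma sdom_rev s x y : sdom e s x y <-> tdom e' s x y.
Proof. by split; [exact: walk_dom_rev | exact: (@walk_dom_rev e')]. Qed.

End Reversal.

Section SinkDominators.
Variables (T : finType) (e : rel T) (t : T).

Lemma tdom_refl u : tdom e t u u.
Proof. by move=> p _ _; exact: mem_head. Qed.

Lemma not_tdom x v :
  ~ tdom e t x v -> exists p, [/\ path e v p, last v p = t & x \notin v :: p].
Proof.
move=> /existsNP [p /not_implyP [vp /not_implyP [pt /negP xp]]].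
by exists p.
Qed.

Hypotheses (e_acyclic : acyclic e) (t_reach : forall v, connect e v t).

Lemma tdom_connect u v : tdom e t u v -> connect e v u.
Proof.
move=> uv; case/connectP: (t_reach v) => p vp pt.
exact: path_connect vp _ (uv p vp (esym pt)).
Qed.

Lemma tdom_child u v : tdom e t u v -> v <> u -> exists w, tidom e t u w.
Proof.
move=> /tdom_rev uv v_neq_u.
have t_reach' w : connect [rel x y | e y x] t w by rewrite connect_rev; exact: t_reach.
have [w [wt uw_neq /tdom_rev uw u_min]] :=
  sdom_child (acyclic_rev e_acyclic) t_reach' uv v_neq_u.
by exists w; split=> // x x_neq_w /tdom_rev /(u_min x x_neq_w) /tdom_rev.
Qed.

End SinkDominators.

Section Cutnodes.
Variables (T : finType) (e : rel T) (s t : T).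

Definition cutnode (x u : T) : Prop := sdom e s x u \/ tdom e t x u.

(* A z-avoiding s-w path passes through u; its u-w part followed by a z-avoiding
   w-t path is a u-t path. *)
Lemma cutnode_sdom u w : sdom e s u w -> forall z, cutnode z u -> cutnode z w.
Proof.
move=> uw z [zu | zu]; first by left; exact: sdom_trans zu uw.
have [zw | /not_sdom [a [sa aw za]]] := pselect (sdom e s z w); [by left | right].
apply: contrapT => /not_tdom [b [wb bt zb]].
have ua := uw a sa aw; case/splitPl: ua sa aw za => a1 a2 a1u.
rewrite cat_path last_cat a1u -cat_cons mem_cat negb_or.
move=> /andP [_ ua2] aw /andP [za1 za2].
have := zu (a2 ++ b); rewrite cat_path ua2 last_cat aw wb bt => /(_ isT erefl).
rewrite in_cons mem_cat => /or3P [/eqP zu_eq | za2' | zb'].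
- by move: za1; rewrite zu_eq -a1u mem_last.
- by rewrite za2' in za2.
- by rewrite inE zb' orbT in zb.
Qed.

Hypotheses (e_acyclic : acyclic e) (s_reach : forall v, connect e s v)
  (t_reach : forall v, connect e v t).

Lemma tdom_succ_connect u w w' : tdom e t w u -> w <> u -> e u w' -> connect e w' w.
Proof.
move=> wu w_neq_u uw'; case/connectP: (t_reach w') => r w'r rt.
have := wu (w' :: r); rewrite /= uw' w'r -rt => /(_ isT erefl).
by rewrite in_cons => /orP [/eqP /w_neq_u [] | /(path_connect w'r)].
Qed.

Lemma sdom_pred u w x : sdom e s u w -> u <> w -> e x w -> sdom e s u x.
Proof.
move=> uw u_neq_w xw p sp px.
have := uw (rcons p w); rewrite rcons_path sp px xw last_rcons => /(_ isT erefl).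
by rewrite -rcons_cons mem_rcons in_cons => /orP [/eqP /u_neq_w [] | ].
Qed.

(* An s-w path avoiding u, continued along a w-v path, would be an s-v path avoiding u. *)
Lemma sdom_succ u v w :
  sdom e s u v -> tdom e t v u -> v <> u -> e u w -> sdom e s u w.
Proof.
move=> uv vu v_neq_u uw; apply: contrapT => /not_sdom [q [sq qw uq]].
case/connectP: (tdom_succ_connect vu v_neq_u uw) => r wr rv.
have := uv (q ++ r); rewrite cat_path sq qw wr last_cat qw -rv => /(_ isT erefl).
rewrite -cat_cons mem_cat (negbTE uq) /= => ur.
have wu : connect e w u by rewrite (path_connect wr) // inE ur orbT.
exact: (acyclic_arc_back e_acyclic uw wu).
Qed.

(* Otherwise u has a unique out-neighbour w0, whose only in-neighbour is u. *)
Lemma sdom_escape u v : compressed e -> sdom e s u v -> v <> u ->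
  exists w, sdom e s u w /\ ~ cutnode w u.
Proof.
move=> e_comp uv v_neq_u; apply: contrapT => /forallNP no_escape.
have tdom_all w : w <> u -> sdom e s u w -> tdom e t w u.
  move=> w_neq_u uw; have [wu | //] : cutnode w u.
    by apply: contrapT => wu; exact: no_escape w (conj uw wu).
  by case: w_neq_u; exact: (sdom_antisym e_acyclic s_reach wu uw).
have [w0 uw0] : exists w0, e u w0.
  case/connectP: (sdom_connect s_reach uv) => -[/= _ vu | w0 p /andP [uw0 _] _].
    by case: v_neq_u.
  by exists w0.
have vu := tdom_all v v_neq_u uv.
have succ_tdom w : e u w -> tdom e t w u.
  move=> uw; have w_neq_u := nesym (acyclic_arc_neq e_acyclic uw).
  exact: tdom_all w_neq_u (sdom_succ uv vu v_neq_u uw).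
have w0_neq_u := nesym (acyclic_arc_neq e_acyclic uw0).
apply: (e_comp u w0 uw0); split=> [w uw | x xw0].
  have w_neq_u := nesym (acyclic_arc_neq e_acyclic uw).
  apply: (acyclic_connect_antisym e_acyclic).
    exact: tdom_succ_connect (succ_tdom w0 uw0) w0_neq_u uw.
  exact: tdom_succ_connect (succ_tdom w uw) w_neq_u uw0.
apply: contrapT => x_neq_u.
have ux := sdom_pred (sdom_succ uv vu v_neq_u uw0) (nesym w0_neq_u) xw0.
have xu := tdom_all x x_neq_u ux.
exact: (acyclic_arc_back e_acyclic xw0 (tdom_succ_connect xu x_neq_u uw0)).
Qed.

End Cutnodes.

Lemma cutnode_rev (T : finType) (e : rel T) s t x u :
  cutnode e s t x u <-> cutnode [rel a b | e b a] t s x u.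
Proof.
rewrite /cutnode; split=> -[xu | xu].
- by right; apply/sdom_rev.
- by left; apply/tdom_rev.
- by right; apply/tdom_rev.
- by left; apply/sdom_rev.
Qed.

Lemma cutnode_tdom (T : finType) (e : rel T) s t u w :
  tdom e t u w -> forall z, cutnode e s t z u -> cutnode e s t z w.
Proof.
move=> /tdom_rev uw z /cutnode_rev zu.
by apply/cutnode_rev; exact: cutnode_sdom uw z zu.
Qed.

Lemma tdom_escape (T : finType) (e : rel T) s t u v :
  acyclic e -> (forall v, connect e s v) -> (forall v, connect e v t) ->
  compressed e -> tdom e t u v -> v <> u ->
  exists w, tdom e t u w /\ ~ cutnode e s t w u.
Proof.
move=> e_acyclic s_reach t_reach e_comp /tdom_rev uv v_neq_u.
have t_reach' x : connect [rel a b | e b a] t x by rewrite connect_rev; exact: t_reach.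
have s_reach' x : connect [rel a b | e b a] x s by rewrite connect_rev; exact: s_reach.
have [w [/tdom_rev uw /cutnode_rev wu]] :=
  sdom_escape (acyclic_rev e_acyclic) t_reach' s_reach' (compressed_rev e_comp) uv v_neq_u.
by exists w.
Qed.

Section Ext.
Variables (T : finType) (e : rel T) (s t : T).
Hypotheses (e_acyclic : acyclic e) (s_reach : forall v, connect e s v)
  (t_reach : forall v, connect e v t).

Lemma mem_s_cuts u x : (x \in s_cuts e s u) = `[< sdom e s x u >].
Proof. by rewrite /s_cuts mem_sort mem_enum inE. Qed.

Lemma mem_t_cuts u x : (x \in t_cuts e t u) = `[< tdom e t x u >].
Proof. by rewrite /t_cuts mem_sort mem_enum inE. Qed.

Lemma sorted_s_cuts u : sorted (connect e) (s_cuts e s u).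
Proof.
case/connectP: (s_reach u) => p sp pu; apply: (sort_connect_sorted sp).
by move=> x; rewrite mem_enum inE => /asboolP /(_ p sp (esym pu)).
Qed.

Lemma sorted_t_cuts u : sorted (connect e) (t_cuts e t u).
Proof.
case/connectP: (t_reach u) => p up pt; apply: (sort_connect_sorted up).
by move=> x; rewrite mem_enum inE => /asboolP /(_ p up (esym pt)).
Qed.

Lemma t_cuts_head u : t_cuts e t u = u :: behead (t_cuts e t u).
Proof.
apply: (sorted_connect_head e_acyclic (sorted_t_cuts u)).
  by rewrite mem_t_cuts; apply/asboolP; exact: tdom_refl.
by move=> x; rewrite mem_t_cuts => /asboolP /(tdom_connect t_reach).
Qed.

Lemma mem_ext u x : x \in ext e s t u <-> cutnode e s t x u.
Proof.
rewrite /ext mem_cat mem_s_cuts /cutnode; split.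
  case/orP=> [/asboolP | xt]; first by left.
  by right; apply/asboolP; rewrite -mem_t_cuts t_cuts_head inE xt orbT.
case=> [xu | /asboolP]; first by apply/orP; left; apply/asboolP.
rewrite -mem_t_cuts t_cuts_head inE => /orP [/eqP -> | ->]; last by rewrite orbT.
by apply/orP; left; apply/asboolP; exact: sdom_refl.
Qed.

Lemma ext_sorted u : is_sequence e (ext e s t u).
Proof.
have sorted_pw := sorted_pairwise (@connect_trans T e).
have tail_sorted : sorted (connect e) (behead (t_cuts e t u)).
  by have := sorted_t_cuts u; rewrite t_cuts_head => /path_sorted.
rewrite /is_sequence /ext sorted_pw pairwise_cat -!sorted_pw.
rewrite sorted_s_cuts tail_sorted !andbT.
apply/allrelP => a b; rewrite mem_s_cuts => /asboolP au bt.
apply: connect_trans (sdom_connect s_reach au) (tdom_connect t_reach _).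
by apply/asboolP; rewrite -mem_t_cuts t_cuts_head inE bt orbT.
Qed.

Lemma st_path_cat v p q :
  path e s p -> last s p = v -> path e v q -> last v q = t ->
  st_path e s t (s :: p ++ q).
Proof. by move=> sp pv vq qt; exists (p ++ q); rewrite cat_path last_cat pv sp vq qt. Qed.

Lemma ext_sub_st_path u P : st_path e s t P -> u \in P -> subseqn (ext e s t u) P.
Proof.
move=> [p [-> sp pt]] up x /mem_ext xu.
case/splitPl: up sp pt => p1 p2 p1u; rewrite cat_path last_cat p1u => /andP [sp1 up2] p2t.
rewrite -cat_cons mem_cat; case: xu => [/(_ p1 sp1 p1u) -> // | /(_ p2 up2 p2t)].
by rewrite inE => /orP [/eqP -> | ->]; rewrite ?orbT // -p1u mem_last.
Qed.

Lemma ext_safe u : safe e s t (ext e s t u).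
Proof.
split; first exact: ext_sorted.
  case/connectP: (s_reach u) => p sp pu; case/connectP: (t_reach u) => q uq qt.
  have stP := st_path_cat sp (esym pu) uq (esym qt).
  exists (s :: p ++ q); split=> //; apply: (ext_sub_st_path stP).
  by rewrite -cat_cons mem_cat pu mem_last.
move=> C [C_st C_cover]; have [P PC uP] := C_cover u.
by exists P => //; exact: ext_sub_st_path (C_st P PC) uP.
Qed.

Lemma ext_not_max_safe u w :
  (forall z, cutnode e s t z u -> cutnode e s t z w) -> ~ cutnode e s t w u ->
  ~ max_safe e s t (ext e s t u).
Proof.
move=> uw wu [_]; apply; exists (ext e s t w); split.
- exact: ext_safe.
- by move=> z /mem_ext /uw /mem_ext.
- exists w; first by apply/mem_ext; left; exact: sdom_refl.
  by apply/negP => /mem_ext.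
Qed.

Lemma st_path_avoiding x v :
  ~ cutnode e s t x v -> exists P, [/\ st_path e s t P, v \in P & x \notin P].
Proof.
move=> /not_orP [/not_sdom [p [sp pv xp]] /not_tdom [q [vq qt xq]]].
exists (s :: p ++ q); split; first exact: st_path_cat sp pv vq qt.
  by rewrite -cat_cons mem_cat -pv mem_last.
by rewrite -cat_cons mem_cat negb_or xp; move: xq; rewrite inE negb_or => /andP [].
Qed.

Lemma path_cover_of (G : seq T -> Prop) :
  (forall v, exists P, [/\ st_path e s t P, v \in P & G P]) ->
  exists C, path_cover e s t C /\ forall P, P \in C -> G P.
Proof.
move=> /choice [f f_ok]; exists [seq f v | v <- enum T]; split; [split |].
- by move=> P /mapP [v _ ->]; have [] := f_ok v.
- by move=> v; exists (f v); [apply: map_f; rewrite mem_enum | have [] := f_ok v].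
- by move=> P /mapP [v _ ->]; have [] := f_ok v.
Qed.

Lemma sleaf_not_sdom u v : sleaf e s u -> v <> u -> ~ sdom e s u v.
Proof.
move=> leaf_u v_neq_u uv.
by have [w] := sdom_child e_acyclic s_reach uv v_neq_u; exact: leaf_u.
Qed.

Lemma tleaf_not_tdom u v : tleaf e t u -> v <> u -> ~ tdom e t u v.
Proof.
move=> leaf_u v_neq_u uv.
by have [w] := tdom_child e_acyclic t_reach uv v_neq_u; exact: leaf_u.
Qed.

Lemma max_safe_ext_of_leaves u :
  sleaf e s u -> tleaf e t u -> max_safe e s t (ext e s t u).
Proof.
move=> sleaf_u tleaf_u; split; first exact: ext_safe.
move=> [Y [[_ _ Y_safe] ext_sub [y yY y_ext]]].
have [C [C_cover C_avoid]] :
    exists C, path_cover e s t C /\ forall P, P \in C -> u \notin P \/ y \notin P.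
  apply: path_cover_of => v; have [-> | /eqP v_neq_u] := eqVneq v u.
    have /st_path_avoiding [P [stP uP yP]] : ~ cutnode e s t y u.
      by move/mem_ext; apply/negP.
    by exists P; split=> //; right.
  have /st_path_avoiding [P [stP vP uP]] : ~ cutnode e s t u v.
    by case; [exact: sleaf_not_sdom | exact: tleaf_not_tdom].
  by exists P; split=> //; left.
have [P PC Y_P] := Y_safe C C_cover.
have uP : u \in P by apply/Y_P/ext_sub/mem_ext; left; exact: sdom_refl.
by case: (C_avoid P PC); rewrite ?uP ?(Y_P y yY).
Qed.

Hypothesis e_comp : compressed e.

Lemma max_safe_ext_sleaf u : max_safe e s t (ext e s t u) -> sleaf e s u.
Proof.
move=> max_u v [_ u_neq_v uv _].
have [w [uw wu]] := sdom_escape e_acyclic s_reach t_reach e_comp uv (nesym u_neq_v).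
exact: (ext_not_max_safe (cutnode_sdom uw) wu max_u).
Qed.

Lemma max_safe_ext_tleaf u : max_safe e s t (ext e s t u) -> tleaf e t u.
Proof.
move=> max_u v [_ u_neq_v uv _].
have [w [uw wu]] := tdom_escape e_acyclic s_reach t_reach e_comp uv (nesym u_neq_v).
exact: (ext_not_max_safe (cutnode_tdom uw) wu max_u).
Qed.

End Ext.

Theorem theorem4 (T : finType) (e : rel T) (s t : T) (u : T) :
  st_dag e s t -> compressed e ->
  (max_safe e s t (ext e s t u) <-> (sleaf e s u /\ tleaf e t u)).
Proof.
move=> [e_acyclic _ _ s_reach t_reach] e_comp; split.
  by move=> max_u; split; [exact: max_safe_ext_sleaf | exact: max_safe_ext_tleaf].
by case; exact: max_safe_ext_of_leaves.
Qed.
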